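(* For every $\pi\in\mathfrak{S}_n$, \[\sum_{k\ge0}\Omega^{(\ell)}(\pi;k)\,t^k=\frac{(1+t)^n}{(1-t)^{n+1}}\left(\frac{4t}{(1+t)^2}\right)^{\operatorname{lpe}(\pi)}\] as formal power series in $t$.
   Context: $\mathfrak{S}_n$ is the symmetric group on $[n]$; permutations are words $(\pi(1),\dots,\pi(n))$. With $\pi(0)=\pi(n+1)=0$, a left peak of $\pi$ is a position $i$ with $1\le i<n$ and $\pi(i-1)<\pi(i)>\pi(i+1)$; $\operatorname{lpe}(\pi)$ is the number of left peaks. For an integer $k\ge0$ let $Z_k$ be the totally ordered set $0<\bar1<1<\bar2<2<\dots<\bar k<k$, with $0$ and unbarred $j$ ''plus-type'' and barred $\bar j$ ''minus-type''. The left enriched order polynomial $\Omega^{(\ell)}(\pi;k)$ is the number of sequences $(a_1,\dots,a_n)\in Z_k^n$ with $a_1\le\dots\le a_n$ such that for every $s\in[n-1]$: if $\pi(s)<\pi(s+1)$ then $a_s<a_{s+1}$ or ($a_s=a_{s+1}$ is plus-type); if $\pi(s)>\pi(s+1)$ then $a_s<a_{s+1}$ or ($a_s=a_{s+1}$ is minus-type). *)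

From mathcomp Require Import all_boot all_order all_algebra.
From mathcomp Require Import fingroup perm.
Set Implicit Arguments. Unset Strict Implicit. Unset Printing Implicit Defensive.
Import GRing.Theory.

(* Permutations of [n] are 's : 'S_n' (permutations of 'I_n = {0,..,n-1});
   the word (pi(1),...,pi(n)) is pi(i) = (s (i-1)).+1.
   [pv s i] is pi(i) with the convention pi(0) = pi(n+1) = 0. *)
Definition pv (n : nat) (s : 'S_n) (i : nat) : nat :=
  nth 0%N (0%N :: [seq (val (s j)).+1 | j <- enum 'I_n] ++ [:: 0%N]) i.

Definition lpe (n : nat) (s : 'S_n) : nat :=
  count (fun i => (pv s i.-1 < pv s i) && (pv s i.+1 < pv s i))%N (iota 1 n.-1).

(* Z_k = {0 < bar1 < 1 < ... < bar k < k} is encoded by 'I_(2k+1):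
   0 |-> 0, bar j |-> 2j-1, j |-> 2j.  Plus-type = even, minus-type = odd. *)
Definition Zk (k : nat) := 'I_(2 * k).+1.
Definition plus_type (k : nat) (z : Zk k) : bool := ~~ odd z.
Definition minus_type (k : nat) (z : Zk k) : bool := odd z.

Definition lenr_cond (k : nat) (asc : bool) (x y : Zk k) : bool :=
  (x <= y)%N &&
  (if asc then (x < y)%N || ((x == y) && plus_type x)
          else (x < y)%N || ((x == y) && minus_type x)).

(* left enriched order polynomial Omega^(l)(pi; k):
   sequences a : [n] -> Z_k (a_{i+1} stored at index i) *)
Definition omega_l (n : nat) (s : 'S_n) (k : nat) : nat :=
  #|[set a : {ffun 'I_n -> Zk k} |
     [forall i : 'I_n, forall j : 'I_n, (val j == (val i).+1) ==>
        let asc := (pv s (val i).+1 < pv s (val j).+1)%N in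
        let desc := (pv s (val j).+1 < pv s (val i).+1)%N in
        (asc ==> lenr_cond true (a i) (a j)) &&
        (desc ==> lenr_cond false (a i) (a j))]]|.

Definition fps := nat -> rat.
Definition fps_mul (f g : fps) : fps :=
  fun m => (\sum_(i < m.+1) f i * g (m - i)%N)%R.
Definition fps_of_poly (p : {poly rat}) : fps := fun m => (p`_m)%R.

Definition fps_eq_frac (F : fps) (P Q : {poly rat}) : Prop :=
  (Q`_0 != 0)%R /\ fps_mul F (fps_of_poly Q) = fps_of_poly P.

(* Encode Z_k as 0 < 1 < ... < 2k (bar j = 2j-1) and count the chains for the
   ascent word of pi by their last value.  After an ascent (resp. a descent) the
   barred value 2j+1 can be reached exactly as often as its lower (resp. upper)
   neighbour, so the counts E(j) at the plus-type values obey
   E'(j) = 2 (E(0) + ... + E(j-1)) + c E(j), with c in {0,1,2} read off the last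
   two letters.  On generating functions this multiplies by (c(1-t) + 2t)/(1-t):
   by 2t/(1-t) at a peak, by 2/(1-t) at a valley and by (1+t)/(1-t) otherwise.
   The bound a_n <= k acts as a final ascent, so valleys and peaks are equally
   many, and the product is (1+t)^n (4t/(1+t)^2)^lpe / (1-t)^(n+1). *)

From mathcomp Require Import all_boot all_order all_algebra.
From mathcomp Require Import fingroup perm.
From mathcomp Require Import zify ring.
From Stdlib Require Import FunctionalExtensionality.
Import GRing.Theory.

Set Implicit Arguments.
Unset Strict Implicit.

Lemma pairmap_rcons (T U : Type) (f : T -> T -> U) x s y :
  pairmap f x (rcons s y) = rcons (pairmap f x s) (f (last x s) y).
Proof. by rewrite -!cats1 pairmap_cat. Qed.

Lemma count_allpairs (S T U : Type) (f : S -> T -> U) (P : pred U) s t :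
  count P [seq f x y | x <- s, y <- t] = \sum_(x <- s) count (fun y => P (f x y)) t.
Proof.
elim: s => [|x s IHs]; first by rewrite big_nil.
by rewrite /= count_cat IHs big_cons count_map.
Qed.

Lemma count_and_const (T : Type) (P : pred T) (c : bool) s :
  count (fun x => P x && c) s = c * count P s.
Proof. by case: c; rewrite ?mul1n ?mul0n; elim: s => //= x s ->; rewrite ?andbT ?andbF. Qed.

Lemma card_set_count (T : finType) (P : pred T) : #|[set a | P a]| = count P (enum T).
Proof. by rewrite cardsE cardE enumT /enum_mem size_filter. Qed.

Definition enr_le (asc : bool) (x y : nat) : bool :=
  (x <= y) && (if asc then (x < y) || (x == y) && ~~ odd x
               else (x < y) || (x == y) && odd x).

Lemma enr_le_lt b x y : x < y -> enr_le b x y.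
Proof. by move=> lt_xy; rewrite /enr_le ltnW // lt_xy; case: b. Qed.

Lemma enr_le_refl b v : enr_le b v v = (if b then ~~ odd v else odd v).
Proof. by rewrite /enr_le leqnn ltnn eqxx. Qed.

Definition nchains (w : seq bool) : nat -> nat :=
  foldl (fun f b v => \sum_(u < v.+1) enr_le b u v * f u) (fun=> 1) w.

Lemma nchains_rcons w b v :
  nchains (rcons w b) v = \sum_(u < v.+1) enr_le b u v * nchains w u.
Proof. by rewrite /nchains foldl_rcons. Qed.

Lemma nchains_rcons_split w b v :
  nchains (rcons w b) v = \sum_(u < v) nchains w u + enr_le b v v * nchains w v.
Proof.
rewrite nchains_rcons big_ord_recr /=; congr (_ + _).
by apply: eq_bigr => u _; rewrite enr_le_lt ?mul1n.
Qed.

Fixpoint chain (w : seq bool) (l : seq nat) : bool :=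
  match w, l with
  | [::], [:: _] => true
  | b :: w', x :: ((y :: _) as l') => enr_le b x y && chain w' l'
  | _, _ => false
  end.

Lemma chain_rcons w b l x :
  chain (rcons w b) (rcons l x) = chain w l && enr_le b (last 0 l) x.
Proof.
elim: w l => [|b' w IHw] [|y [|z l]] //=.
- by rewrite andbT.
- by case: l => [|? ?]; rewrite /= andbF.
- by case: w {IHw} => [|? ?]; rewrite /= andbF.
- by rewrite (IHw (z :: l)) andbA.
Qed.

Lemma chainP w l : size l = (size w).+1 ->
  reflect (forall i, i < size w -> enr_le (nth false w i) (nth 0 l i) (nth 0 l i.+1))
          (chain w l).
Proof.
elim: w l => [|b w IHw] [|x [|y l]] //= size_l; first by constructor.
have {}IHw := IHw (y :: l) (succn_inj size_l).
apply: (iffP andP) => [[xy /IHw chain_yl] [|i] //= /chain_yl //|chain_xyl].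
by split; [exact: (chain_xyl 0) | apply/IHw => i; apply: (chain_xyl i.+1)].
Qed.

Fixpoint bounded_seqs (B n : nat) : seq (seq nat) :=
  if n is n'.+1 then [seq rcons l x | x <- iota 0 B.+1, l <- bounded_seqs B n']
  else [:: [::]].

Lemma bounded_seqsS B n :
  bounded_seqs B n.+1 = [seq rcons l x | x <- iota 0 B.+1, l <- bounded_seqs B n].
Proof. by []. Qed.

Lemma mem_bounded_seqs B n l :
  (l \in bounded_seqs B n) = (size l == n) && all (leq^~ B) l.
Proof.
elim: n l => [|n IHn] l; first by case: l.
rewrite bounded_seqsS; case/lastP: l => [|l x].
  by apply/negbTE/negP => /allpairsP [[x l] /= [_ _ /(congr1 size)]]; rewrite size_rcons.
rewrite size_rcons eqSS all_rcons andbCA -IHn.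
apply/allpairsP/andP => [[[y l'] [y_in l'_in /rcons_inj [-> ->]]]|[x_le l_in]].
  by move: y_in; rewrite mem_iota leq0n add0n ltnS.
by exists (x, l); rewrite mem_iota leq0n add0n ltnS.
Qed.

Lemma uniq_bounded_seqs B n : uniq (bounded_seqs B n).
Proof.
elim: n => [|n IHn] //; rewrite bounded_seqsS.
apply: allpairs_uniq => //; first exact: iota_uniq.
by move=> [x1 l1] [x2 l2] _ _ /= /rcons_inj [-> ->].
Qed.

Lemma count_chains_rcons w B v : v <= B ->
  count (fun l => chain w (rcons l v)) (bounded_seqs B (size w)) = nchains w v.
Proof.
elim/last_ind: w v => [|w b IHw] v le_vB //.
rewrite size_rcons bounded_seqsS count_allpairs nchains_rcons.
rewrite (@big_ord_widen _ _ _ v.+1 B.+1 (fun u => enr_le b u v * nchains w u)) //.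
have -> : iota 0 B.+1 = index_iota 0 B.+1 by rewrite /index_iota subn0.
rewrite big_mkord [RHS]big_mkcond; apply: eq_bigr => u _.
under eq_count => l do rewrite chain_rcons last_rcons.
rewrite count_and_const IHw; last by rewrite -ltnS.
case: ltnP => // lt_vu.
by rewrite /enr_le leqNgt lt_vu.
Qed.

Lemma count_chains w B :
  count (chain w) (bounded_seqs B (size w).+1) = \sum_(v < B.+1) nchains w v.
Proof.
rewrite bounded_seqsS count_allpairs.
have -> : iota 0 B.+1 = index_iota 0 B.+1 by rewrite /index_iota subn0.
by rewrite big_mkord; apply: eq_bigr => v _; rewrite count_chains_rcons // -ltnS.
Qed.

Lemma nchains_odd w j : last true w -> nchains w (2 * j).+1 = nchains w (2 * j).
Proof.
case/lastP: w => [|w b] //; rewrite last_rcons => ->.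
by rewrite !nchains_rcons_split big_ord_recr /= !enr_le_refl /= oddM /= addn0 mul1n.
Qed.

Lemma nchains_even_desc w j :
  ~~ last true w -> nchains w (2 * j).+2 = nchains w (2 * j).+1.
Proof.
case/lastP: w => [|w b] //; rewrite last_rcons => /negbTE->.
by rewrite !nchains_rcons_split [in LHS]big_ord_recr /= !enr_le_refl /= oddM /= addn0 mul1n.
Qed.

Lemma nchains0_desc w : ~~ last true w -> nchains w 0 = 0.
Proof.
case/lastP: w => [|w b] //; rewrite last_rcons => /negbTE->.
by rewrite nchains_rcons_split big_ord0.
Qed.

Definition pchains (w : seq bool) (j : nat) : nat := nchains w (2 * j).

Lemma sum_nchains_even w j :
  \sum_(u < 2 * j) nchains w u =
  2 * \sum_(i < j) pchains w i + ~~ last true w * pchains w j.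
Proof.
elim: j => [|j IHj].
  by rewrite !big_ord0 /pchains; case: (boolP (last true w)) => [|/nchains0_desc->].
have two_jS : 2 * j.+1 = (2 * j).+2 by rewrite mulnS.
rewrite two_jS !big_ord_recr /= IHj /pchains two_jS.
case: (boolP (last true w)) => [up|down] /=.
  by rewrite nchains_odd //; lia.
by rewrite nchains_even_desc //; lia.
Qed.

Lemma pchains_rcons w b j :
  pchains (rcons w b) j =
  2 * \sum_(i < j) pchains w i + (b + ~~ last true w) * pchains w j.
Proof.
rewrite {1}/pchains nchains_rcons_split sum_nchains_even enr_le_refl oddM /=.
by case: b; case: (last true w); rewrite /pchains /=; lia.
Qed.

Lemma pchains_rcons_asc w k :
  pchains (rcons w true) k = \sum_(v < (2 * k).+1) nchains w v.
Proof.
by rewrite /pchains nchains_rcons_split big_ord_recr enr_le_refl oddM /= mul1n.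
Qed.

Local Open Scope ring_scope.

Section Truncation.
Variable R : nzRingType.

Definition eq_upto (m : nat) (p q : {poly R}) : Prop :=
  forall i, (i <= m)%N -> p`_i = q`_i.

Lemma eq_upto_mulr m p q r : eq_upto m p q -> eq_upto m (p * r) (q * r).
Proof.
move=> pq i le_im; rewrite !coefM; apply: eq_bigr => j _.
by rewrite pq // (leq_trans _ le_im) // -ltnS.
Qed.

End Truncation.

Definition trunc_ps (m : nat) (e : nat -> nat) : {poly rat} := \poly_(i < m.+1) (e i)%:R.

Lemma fps_mul_polyE (e : nat -> nat) (q : {poly rat}) m :
  fps_mul (fun k => (e k)%:R) (fps_of_poly q) m = (trunc_ps m e * q)`_m.
Proof. by rewrite coefM; apply: eq_bigr => i _; rewrite coef_poly ltn_ord. Qed.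

Definition step_factor (c : nat) : {poly rat} := c%:R * (1 - 'X) + 2%:R * 'X.

Lemma trunc_ps_recurrence m c (e e' : nat -> nat) :
  (forall j, e' j = 2 * \sum_(i < j) e i + c * e j)%N ->
  eq_upto m (trunc_ps m e' * (1 - 'X)) (trunc_ps m e * step_factor c).
Proof.
move=> e'E i le_im.
have -> : trunc_ps m e * step_factor c =
          (trunc_ps m e - trunc_ps m e * 'X) *+ c + (trunc_ps m e * 'X) *+ 2.
  by rewrite /step_factor; ring.
rewrite mulrBr mulr1 !(coefD, coefMn, coefB, coefN, coefMX, coef_poly).
case: i le_im => [|i] le_im /=.
  by rewrite e'E big_ord0 muln0 add0n natrM -mulr_natr; ring.
rewrite !ltnS le_im (ltnW le_im) !e'E big_ord_recr /=.
by rewrite !(natrD, natrM) -mulr_natr; ring.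
Qed.

Definition step_code (prev b : bool) : nat := b + ~~ prev.
Definition is_peak (prev b : bool) : bool := prev && ~~ b.

(* The initial [true] is the ascent from pi(0) = 0 to pi(1). *)
Definition word_poly (w : seq bool) : {poly rat} :=
  \prod_(c <- pairmap step_code true w) step_factor c.
Definition npeaks (w : seq bool) : nat := count id (pairmap is_peak true w).

Lemma word_poly_rcons w b :
  word_poly (rcons w b) = word_poly w * step_factor (step_code (last true w) b).
Proof. by rewrite /word_poly pairmap_rcons -cats1 big_cat big_seq1. Qed.

Lemma npeaks_rcons w b : npeaks (rcons w b) = (npeaks w + is_peak (last true w) b)%N.
Proof. by rewrite /npeaks pairmap_rcons -cats1 count_cat /= addn0. Qed.

Lemma pchains_series w m :
  eq_upto m (trunc_ps m (pchains w) * (1 - 'X) ^+ (size w).+1) (word_poly w).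
Proof.
elim/last_ind: w => [|w b IHw].
  move=> i le_im; rewrite expr1 mulrBr mulr1 coefB coefMX !coef_poly /word_poly big_nil coefC.
  by case: i le_im => [|i] le_im //=; rewrite !ltnS le_im (ltnW le_im) subrr.
move=> i le_im; rewrite size_rcons exprS mulrA word_poly_rcons.
rewrite (eq_upto_mulr _ (trunc_ps_recurrence (pchains_rcons w b))) //.
by rewrite mulrAC (eq_upto_mulr _ IHw).
Qed.

Lemma word_poly_closed w :
  word_poly w * ((1 + 'X) ^+ 2) ^+ npeaks w * (if last true w then 1 else 2%:R) =
  (1 + 'X) ^+ (size w + ~~ last true w) * (4%:R * 'X) ^+ npeaks w.
Proof.
elim/last_ind: w => [|w b IHw].
  by rewrite /word_poly /npeaks big_nil /= !expr0 !mulr1.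
rewrite word_poly_rcons npeaks_rcons size_rcons last_rcons.
move: IHw; rewrite /step_code /is_peak /step_factor.
set A := word_poly w; set L := npeaks w; set n := size w; clearbody A L n.
case: (last true w); case: b => /= IHw; rewrite ?addn0 ?addn1 in IHw *.
- transitivity (A * ((1 + 'X) ^+ 2) ^+ L * 1 * (1 + 'X)); first by rewrite !exprS; ring.
  by rewrite IHw !exprS; ring.
- transitivity (A * ((1 + 'X) ^+ 2) ^+ L * 1 * (4%:R * 'X * (1 + 'X) ^+ 2)).
    by rewrite !exprS; ring.
  by rewrite IHw !exprS; ring.
- transitivity (A * ((1 + 'X) ^+ 2) ^+ L * 2%:R); first by rewrite !exprS; ring.
  by rewrite IHw !exprS; ring.
- transitivity (A * ((1 + 'X) ^+ 2) ^+ L * 2%:R * (1 + 'X)); first by rewrite !exprS; ring.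
  by rewrite IHw !exprS; ring.
Qed.

Lemma pchains_gf (F : fps) w : last true w -> F =1 (fun k => (pchains w k)%:R) ->
  fps_eq_frac F
    ((1 + 'X) ^+ size w * (4%:R *: 'X) ^+ npeaks w)
    ((1 - 'X) ^+ (size w).+1 * ((1 + 'X) ^+ 2) ^+ npeaks w).
Proof.
move=> up /functional_extensionality-> {F}; split.
  by rewrite -horner_coef0 !hornerE !expr1n mulr1 oner_neq0.
apply: functional_extensionality => m.
rewrite fps_mul_polyE /fps_of_poly mulrA (eq_upto_mulr _ (@pchains_series w m)) //.
by have := word_poly_closed w; rewrite up mulr1 addn0 scaler_nat mulr_natl => ->.
Qed.

Local Close Scope ring_scope.

Lemma pvE n (s : 'S_n) (i : 'I_n) : pv s i.+1 = (s i).+1.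
Proof.
rewrite /pv /= nth_cat size_map size_enum_ord ltn_ord.
by rewrite (nth_map i) ?size_enum_ord // nth_ord_enum.
Qed.

Lemma pv_neq n (s : 'S_n) i : 0 < i < n -> pv s i != pv s i.+1.
Proof.
case: i => [|i] // /andP[_ lt_in].
rewrite (pvE s (Ordinal (ltnW lt_in))) (pvE s (Ordinal lt_in)) eqSS.
by apply/eqP => /val_inj/perm_inj/(congr1 val) /=; lia.
Qed.

Lemma ascdesc_enr_le p q x y : p != q ->
  ((p < q) ==> enr_le true x y) && ((q < p) ==> enr_le false x y) = enr_le (p < q) x y.
Proof. by case: ltngtP => //=; rewrite andbT. Qed.

Definition ffun_vals n B (a : {ffun 'I_n -> 'I_B}) : seq nat :=
  [seq val (a i) | i <- enum 'I_n].

Lemma size_ffun_vals n B (a : {ffun 'I_n -> 'I_B}) : size (ffun_vals a) = n.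
Proof. by rewrite size_map size_enum_ord. Qed.

Lemma nth_ffun_vals n B (a : {ffun 'I_n -> 'I_B}) (i : 'I_n) :
  nth 0 (ffun_vals a) i = a i.
Proof. by rewrite (nth_map i) ?size_enum_ord // nth_ord_enum. Qed.

Lemma chain_ffun_vals n B w (a : {ffun 'I_n -> 'I_B}) : 0 < n -> size w = n.-1 ->
  chain w (ffun_vals a) =
  [forall i : 'I_n, forall j : 'I_n,
     (j == i.+1 :> nat) ==> enr_le (nth false w i) (a i) (a j)].
Proof.
move=> n_gt0 size_w.
have size_a : size (ffun_vals a) = (size w).+1 by rewrite size_ffun_vals size_w prednK.
apply/(chainP size_a)/forallP => [chain_a i|cond_a j lt_jw].
  apply/forallP => j; apply/implyP => /eqP j_eq.
  have lt_iw : i < size w by have := ltn_ord j; rewrite size_w; lia.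
  by move: (chain_a i lt_iw); rewrite nth_ffun_vals -j_eq nth_ffun_vals.
have lt_jn : j < n by rewrite size_w in lt_jw; lia.
have lt_j1n : j.+1 < n by rewrite size_w in lt_jw; lia.
have := forallP (cond_a (Ordinal lt_jn)) (Ordinal lt_j1n); rewrite eqxx /=.
by rewrite -(nth_ffun_vals a (Ordinal lt_jn)) -(nth_ffun_vals a (Ordinal lt_j1n)).
Qed.

Lemma perm_ffun_vals_bounded n B :
  perm_eq [seq ffun_vals a | a <- enum {ffun 'I_n -> 'I_B.+1}] (bounded_seqs B n).
Proof.
apply: uniq_perm; last 1 first.
- move=> l; rewrite mem_bounded_seqs; apply/mapP/andP => [[a _ ->]|[/eqP size_l l_le]].
    rewrite size_ffun_vals; split=> //.
    by apply/allP => _ /mapP[i _ ->]; case: (a i).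
  exists [ffun i : 'I_n => inord (nth 0 l i)]; first by rewrite mem_enum.
  apply: (@eq_from_nth _ 0); first by rewrite size_ffun_vals.
  move=> i; rewrite size_l => lt_in.
  rewrite (nth_ffun_vals _ (Ordinal lt_in)) ffunE inordK // ltnS.
  by apply: (allP l_le); rewrite mem_nth ?size_l.
- rewrite map_inj_uniq ?enum_uniq // => a1 a2 eq_a.
  by apply/ffunP => i; apply: val_inj; rewrite /= -!nth_ffun_vals eq_a.
- exact: uniq_bounded_seqs.
Qed.

Definition asc_word n (s : 'S_n) : seq bool := [seq pv s i < pv s i.+1 | i <- iota 1 n.-1].

Lemma size_asc_word n (s : 'S_n) : size (asc_word s) = n.-1.
Proof. by rewrite size_map size_iota. Qed.

Lemma nth_asc_word n (s : 'S_n) i :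
  i < n.-1 -> nth false (asc_word s) i = (pv s i.+1 < pv s i.+2).
Proof. by move=> lt_in; rewrite (nth_map 0) ?size_iota // nth_iota. Qed.

Lemma omega_l_count n (s : 'S_n) k : 0 < n ->
  omega_l s k = count (chain (asc_word s)) (bounded_seqs (2 * k) n).
Proof.
move=> n_gt0; rewrite /omega_l card_set_count.
rewrite (eq_count (a2 := fun a => chain (asc_word s) (ffun_vals a))) => [|a]; last first.
  rewrite /= chain_ffun_vals ?size_asc_word //.
  apply: eq_forallb => i; apply: eq_forallb => j; case: eqP => //= j_eq.
  have lt_in : i < n.-1 by have := ltn_ord j; rewrite j_eq; lia.
  rewrite j_eq nth_asc_word //; apply: ascdesc_enr_le; apply: pv_neq.
  by rewrite /=; lia.
by rewrite -count_map (seq.permP (perm_ffun_vals_bounded n (2 * k))).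
Qed.

Lemma omega_l_pchains n (s : 'S_n) k : 0 < n ->
  omega_l s k = pchains (rcons (asc_word s) true) k.
Proof.
move=> n_gt0; rewrite omega_l_count // pchains_rcons_asc -count_chains.
by rewrite size_asc_word prednK.
Qed.

Lemma omega_l0 (s : 'S_0) k : omega_l s k = 1.
Proof.
rewrite /omega_l (_ : [set a | _] = setT) ?cardsT ?card_ffun ?card_ord //.
by apply/setP => a; rewrite !inE; apply/forallP => -[].
Qed.

Lemma count_peaks_iota n (s : 'S_n) i m : 0 < i -> i + m <= n ->
  count (fun j => (pv s j.-1 < pv s j) && (pv s j.+1 < pv s j)) (iota i m) =
  count id (pairmap is_peak (pv s i.-1 < pv s i) [seq pv s j < pv s j.+1 | j <- iota i m]).
Proof.
elim: m i => [|m IHm] i i_gt0 le_imn //=.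
rewrite IHm //; last by lia.
rewrite /is_peak; congr (nat_of_bool (_ && _) + _).
have : pv s i != pv s i.+1 by apply: pv_neq; lia.
by case: ltngtP.
Qed.

Lemma lpe_npeaks n (s : 'S_n) : 0 < n -> lpe s = npeaks (asc_word s).
Proof.
move=> n_gt0; rewrite /lpe count_peaks_iota //; last by lia.
by case: n s n_gt0 => [|n] s _ //; rewrite (pvE s ord0).
Qed.

Local Open Scope ring_scope.

Theorem theorem4p6 (n : nat) (s : 'S_n) :
  fps_eq_frac (fun k => (omega_l s k)%:R)
    ((1 + 'X) ^+ n * (4%:R *: 'X) ^+ lpe s)
    ((1 - 'X) ^+ n.+1 * ((1 + 'X) ^+ 2) ^+ lpe s).
Proof.
case: n s => [|n] s.
  by apply: (pchains_gf (w := [::])) => // k; rewrite omega_l0.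
have asc_up := last_rcons true (asc_word s) true.
have := pchains_gf asc_up (fun k => congr1 _ (omega_l_pchains s k isT)).
by rewrite size_rcons size_asc_word npeaks_rcons /is_peak andbF addn0 -lpe_npeaks.
Qed.
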